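(* There is no orientation of the $4$-cube in which exactly $7$ vertices have in-degree $0$, exactly $2$ vertices have in-degree $2$, and exactly $7$ vertices have in-degree $4$ (even though $7+2+7=2^4$ and $0\cdot 7+2\cdot 2+4\cdot 7=4\cdot 2^{3}$).
   Context: The $4$-cube is the graph on binary $4$-tuples with edges between tuples differing in exactly one coordinate. An orientation assigns a direction to each edge; the in-degree of a vertex is the number of edges directed into it. *)

From mathcomp Require Import all_boot.
Set Implicit Arguments. Unset Strict Implicit. Unset Printing Implicit Defensive.

Definition cube_vertex (n : nat) := {ffun 'I_n -> bool}.

Definition cube_adj (n : nat) (u v : cube_vertex n) : bool :=
  #|[set i : 'I_n | u i != v i]| == 1.

(* An orientation of the n-cube, given as the relation "u -> v" (edge directed
   from u to v): only edges are directed, and each edge receives exactly one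
   direction. *)
Definition is_orientation (n : nat) (o : rel (cube_vertex n)) : Prop :=
  forall u v : cube_vertex n,
    (o u v -> cube_adj u v) /\ (cube_adj u v -> (o u v (+) o v u)).

Definition indeg (n : nat) (o : rel (cube_vertex n)) (v : cube_vertex n) : nat :=
  #|[set u : cube_vertex n | o u v]|.

From mathcomp Require Import all_boot.
Set Implicit Arguments. Unset Strict Implicit. Unset Printing Implicit Defensive.

(* Since 7 + 2 + 7 = 16, every vertex has in-degree 0, 2 or 4, and neither two
   sources nor two sinks are adjacent.  Call the two vertices of in-degree 2
   balanced, and let a be one of them and b the other.  Then a
   has an in-neighbour a + e_i other than b, necessarily a source, and an
   out-neighbour a + e_j other than b, necessarily a sink.  Their common
   neighbour a + e_i + e_j is adjacent to a source and to a sink, so it has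
   in-degree 2 and is b.  For a third direction m the neighbour a + e_m can then
   be neither a source (the same argument would give b = a + e_m + e_j), nor a
   sink (b = a + e_i + e_m), nor b.  The argument works in every dimension n >= 4
   and for one or two vertices of in-degree 2. *)

Lemma card_preimset_seq (T : finType) (U : eqType) (f : T -> U) (s : seq U) :
  uniq s -> #|[set x | f x \in s]| = \sum_(k <- s) #|[set x | f x == k]|.
Proof.
elim: s => [_ | k s IHs /= /andP [k_notin_s uniq_s]].
  by rewrite big_nil; apply/eqP; rewrite cards_eq0; apply/eqP/setP => x; rewrite !inE.
have -> : [set x | f x \in k :: s] = [set x | f x == k] :|: [set x | f x \in s].
  by apply/setP => x; rewrite !inE.
rewrite big_cons -IHs //; apply/eqP; rewrite (leq_card_setU _ _).2.
by apply/pred0P => x /=; rewrite !inE; apply/negP => /andP [/eqP ->]; apply/negP.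
Qed.

Lemma card_gt1_exists_neq (T : finType) (A : {pred T}) (b : T) :
  1 < #|A| -> exists2 x, x \in A & x != b.
Proof.
case/card_gt1P => x [y [xA yA neq_xy]].
by case: (x =P b) => [x_b | /eqP]; [exists y; rewrite // -x_b eq_sym | exists x].
Qed.

Lemma exists_ord_neq2 n (i j : 'I_n) : 2 < n -> exists m : 'I_n, (m != i) && (m != j).
Proof.
move=> n_gt2; have : 0 < #|~: [set i; j]|.
  rewrite -(leq_add2l #|[set i; j]|) cardsC card_ord cards2 addn1.
  by case: (i != j) => //; apply: ltnW.
by case/card_gt0P => m; rewrite !inE negb_or => ?; exists m.
Qed.

Section Cube.
Variable n : nat.
Implicit Types (u v : cube_vertex n) (i j : 'I_n).

Definition cube_flip v j : cube_vertex n := [ffun i => if i == j then ~~ v i else v i].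

Lemma cube_flipE v j i : cube_flip v j i = (if i == j then ~~ v i else v i).
Proof. by rewrite ffunE. Qed.

Lemma cube_flipK j : involutive (cube_flip^~ j).
Proof. by move=> v; apply/ffunP => i; rewrite !cube_flipE; case: (i == j); rewrite ?negbK. Qed.

Lemma cube_flipC v i j : cube_flip (cube_flip v i) j = cube_flip (cube_flip v j) i.
Proof. by apply/ffunP => k; rewrite !cube_flipE; case: (k == i); case: (k == j). Qed.

Lemma cube_flip_inj v : injective (cube_flip v).
Proof.
move=> i j /(congr1 (fun w : cube_vertex n => w i)); rewrite !cube_flipE eqxx.
by case: (i =P j) => // _; case: (v i).
Qed.

Lemma cube_flip_neq v j : cube_flip v j != v.
Proof. by apply/eqP => /(congr1 (fun w : cube_vertex n => w j)); rewrite cube_flipE eqxx; case: (v j). Qed.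

Lemma cube_flip2_neq v i j : i != j -> cube_flip (cube_flip v i) j != v.
Proof.
move=> neq_ij; apply/eqP => /(congr1 (cube_flip^~ j)); rewrite cube_flipK.
by move/cube_flip_inj/eqP; rewrite (negbTE neq_ij).
Qed.

Lemma cube_flip_neq_flip2 v i j m :
  m != i -> m != j -> cube_flip v m != cube_flip (cube_flip v i) j.
Proof.
move=> /negbTE neq_mi /negbTE neq_mj; apply/eqP => /(congr1 (fun w : cube_vertex n => w m)).
by rewrite !cube_flipE neq_mi neq_mj eqxx; case: (v m).
Qed.

Lemma cube_adjP u v : reflect (exists j, u = cube_flip v j) (cube_adj u v).
Proof.
apply: (iffP idP) => [/cards1P [j diff_j] | [j ->]].
  exists j; apply/ffunP => i; rewrite cube_flipE.
  move/setP/(_ i): diff_j; rewrite !inE.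
  by case: (i =P j) => [-> | _] /=; case: (u _); case: (v _).
by apply/cards1P; exists j; apply/setP => i; rewrite !inE cube_flipE; case: (i == j); case: (v i).
Qed.

Lemma cube_adj_sym u v : cube_adj u v = cube_adj v u.
Proof.
by apply/cube_adjP/cube_adjP => [] [j ->]; exists j; rewrite cube_flipK.
Qed.

Lemma cube_adj_irr v : ~~ cube_adj v v.
Proof. by apply/cube_adjP => [] [j /eqP]; rewrite eq_sym (negbTE (cube_flip_neq _ _)). Qed.

Lemma cube_nbrsE v : [set u | cube_adj u v] = [set cube_flip v j | j : 'I_n].
Proof. by apply/setP => u; rewrite inE; apply/cube_adjP/imsetP => [] [j]; exists j. Qed.

Lemma card_cube_nbrs v : #|[set u | cube_adj u v]| = n.
Proof. by rewrite cube_nbrsE card_imset ?cardsT ?card_ord //; apply: cube_flip_inj. Qed.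

Lemma card_cube_vertex : #|cube_vertex n| = 2 ^ n.
Proof. by rewrite card_ffun card_bool card_ord. Qed.

End Cube.

Section Orientation.
Variables (n : nat) (o : rel (cube_vertex n)).
Hypothesis o_orient : is_orientation o.
Implicit Types (u v s t : cube_vertex n).

Lemma orient_adj u v : o u v -> cube_adj u v.
Proof. exact: (o_orient u v).1. Qed.

Lemma orient_asym u v : o u v -> ~~ o v u.
Proof. by move=> ouv; have := (o_orient u v).2 (orient_adj ouv); rewrite ouv; case: (o v u). Qed.

Lemma orient_total u v : cube_adj u v -> ~~ o u v -> o v u.
Proof. by move=> /(o_orient u v).2; case: (o u v); case: (o v u). Qed.

Lemma in_nbrs_sub v : [set u | o u v] \subset [set u | cube_adj u v].
Proof. by apply/subsetP => u; rewrite !inE; apply: orient_adj. Qed.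

Lemma card_out_nbrs v :
  #|[set u | cube_adj u v] :\: [set u | o u v]| = n - indeg o v.
Proof. by rewrite cardsDS ?in_nbrs_sub // card_cube_nbrs. Qed.

Lemma indeg0_out s v : indeg o s = 0 -> cube_adj s v -> o s v.
Proof.
move=> /eqP; rewrite cards_eq0 => /eqP src adj_sv; apply: contraT => not_osv.
have : v \in [set u | o u s] by rewrite inE; apply: orient_total.
by rewrite src inE.
Qed.

Lemma indegn_in t u : indeg o t = n -> cube_adj u t -> o u t.
Proof.
move=> sink adj_ut; have : #|[set u | cube_adj u t] :\: [set u | o u t]| == 0.
  by rewrite card_out_nbrs sink subnn.
by rewrite cards_eq0 => /eqP/setP/(_ u); rewrite !inE adj_ut andbT => /negbFE.
Qed.

Lemma indeg0_nonadj s s' : indeg o s = 0 -> indeg o s' = 0 -> ~~ cube_adj s s'.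
Proof.
move=> src src'; apply/negP => adj_ss'.
have := orient_asym (indeg0_out src adj_ss').
by rewrite indeg0_out // cube_adj_sym.
Qed.

Lemma indegn_nonadj t t' : indeg o t = n -> indeg o t' = n -> ~~ cube_adj t t'.
Proof.
move=> sink sink'; apply/negP => adj_tt'.
have := orient_asym (indegn_in sink' adj_tt').
by rewrite indegn_in // cube_adj_sym.
Qed.

End Orientation.

Section TwoBalancedVertices.
Variables (n : nat) (o : rel (cube_vertex n)) (a b : cube_vertex n).
Hypotheses (o_orient : is_orientation o) (n_ge4 : 3 < n).
Hypothesis indeg_02n : forall v, indeg o v \in [:: 0; 2; n].
Hypotheses (indeg_a : indeg o a = 2) (indeg2_ab : forall v, indeg o v = 2 -> v = a \/ v = b).

Lemma indegP v : [\/ indeg o v = 0, indeg o v = 2 | indeg o v = n].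
Proof.
have := indeg_02n v; rewrite !inE => /or3P [] /eqP deg_v.
- exact: Or31.
- exact: Or32.
- exact: Or33.
Qed.

Lemma nbr_indeg2 v : cube_adj v a -> indeg o v = 2 -> v = b.
Proof.
move=> adj_va /indeg2_ab [v_a | //].
by move: adj_va; rewrite v_a (negbTE (cube_adj_irr a)).
Qed.

Lemma source_sink_common_nbr i j :
  i != j -> indeg o (cube_flip a i) = 0 -> indeg o (cube_flip a j) = n ->
  cube_flip (cube_flip a i) j = b.
Proof.
set c := cube_flip (cube_flip a i) j => neq_ij src sink.
have adj_cs : cube_adj c (cube_flip a i) by apply/cube_adjP; exists j.
have adj_ct : cube_adj c (cube_flip a j) by apply/cube_adjP; exists i; rewrite cube_flipC.
case: (indegP c) => [c_src | /indeg2_ab [c_a | //] | c_sink].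
- by have := indeg0_nonadj o_orient c_src src; rewrite adj_cs.
- by have := cube_flip2_neq a neq_ij; rewrite -/c c_a eqxx.
- by have := indegn_nonadj o_orient c_sink sink; rewrite adj_ct.
Qed.

Lemma exists_source_in_nbr : exists i, indeg o (cube_flip a i) = 0.
Proof.
have [s] : exists2 s, s \in [set u | o u a] & s != b.
  by apply: card_gt1_exists_neq; rewrite -[#|_|]/(indeg o a) indeg_a.
rewrite inE => os neq_sb.
have [i s_flip] := cube_adjP _ _ (orient_adj o_orient os); exists i; rewrite -s_flip.
case: (indegP s) => [// | s_bal | s_sink].
- by rewrite (nbr_indeg2 (orient_adj o_orient os) s_bal) eqxx in neq_sb.
- have := orient_asym o_orient os.
  by rewrite (indegn_in o_orient s_sink) // cube_adj_sym (orient_adj o_orient os).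
Qed.

Lemma exists_sink_out_nbr : exists j, indeg o (cube_flip a j) = n.
Proof.
have [t] : exists2 t, t \in [set u | cube_adj u a] :\: [set u | o u a] & t != b.
  by apply: card_gt1_exists_neq; rewrite card_out_nbrs // indeg_a ltn_subRL addn1.
rewrite !inE => /andP [not_ota adj_ta] neq_tb.
have [j t_flip] := cube_adjP _ _ adj_ta; exists j; rewrite -t_flip.
case: (indegP t) => [t_src | t_bal | //].
- by rewrite (indeg0_out o_orient t_src adj_ta) in not_ota.
- by rewrite (nbr_indeg2 adj_ta t_bal) eqxx in neq_tb.
Qed.

Lemma two_balanced_vertices_absurd : False.
Proof.
have [i src] := exists_source_in_nbr; have [j sink] := exists_sink_out_nbr.
have neq_ij : i != j.
  by apply: contraTneq n_ge4 => eq_ij; rewrite -sink -eq_ij src.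
have b_def := source_sink_common_nbr neq_ij src sink.
have [m /andP [neq_mi neq_mj]] := exists_ord_neq2 i j (ltnW n_ge4).
have adj_ma : cube_adj (cube_flip a m) a by apply/cube_adjP; exists m.
case: (indegP (cube_flip a m)) => [m_src | m_bal | m_sink].
- have := source_sink_common_nbr neq_mj m_src sink.
  rewrite -b_def !(cube_flipC _ _ j) => /cube_flip_inj eq_mi.
  by rewrite eq_mi eqxx in neq_mi.
- have := cube_flip_neq_flip2 a neq_mi neq_mj.
  by rewrite (nbr_indeg2 adj_ma m_bal) b_def eqxx.
- have neq_im : i != m by rewrite eq_sym.
  have := source_sink_common_nbr neq_im src m_sink.
  rewrite -b_def => /cube_flip_inj eq_mj.
  by rewrite eq_mj eqxx in neq_mj.
Qed.

End TwoBalancedVertices.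

Theorem mainTheorem6 :
  ~ exists o : rel (cube_vertex 4),
      [/\ is_orientation o,
          #|[set v : cube_vertex 4 | indeg o v == 0]| = 7,
          #|[set v : cube_vertex 4 | indeg o v == 2]| = 2 &
          #|[set v : cube_vertex 4 | indeg o v == 4]| = 7].
Proof.
move=> [o [o_orient card0 card2 card4]].
have /subset_cardP indeg_024 :
    #|[set v | indeg o v \in [:: 0; 2; 4]]| = #|[set: cube_vertex 4]|.
  by rewrite card_preimset_seq // !big_cons big_nil card0 card2 card4 cardsT card_cube_vertex.
have [a [b [_ balanced_ab]]] := cards2P _ (introT eqP card2).
apply: (@two_balanced_vertices_absurd 4 o a b o_orient) => // [v | | v].
- by have := indeg_024 (subsetT _) v; rewrite !inE => ->.
- have : a \in [set a; b] by rewrite !inE eqxx.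
  by rewrite -balanced_ab inE => /eqP.
- move=> bal_v; have : v \in [set a; b] by rewrite -balanced_ab inE bal_v.
  by rewrite !inE => /orP [] /eqP; [left | right].
Qed.
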